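(* Let $G^1$ be a 1-wconnected 1-graph and let $S^0$ be any 0-section of $G^1$. Then every 0-hypernode of the enlargement ${}^{*}S^0$ lies in the principal 1-galaxy $\Gamma_0^1$ of ${}^{*}G^1$.
   Context: 1-graphs. A 1-graph $G^1=\{X^0,B,X^1\}$ consists of a graph $G^0=\{X^0,B\}$ (0-nodes $X^0$; branches are two-element sets of 0-nodes) together with a set $X^1$ of 1-nodes. To form $X^1$, the 0-tips of $G^0$ (equivalence classes of eventually identical one-ended paths) are partitioned into subsets, some of which are augmented by a single 0-node (each 0-node used at most once). 0-sections. A 0-section is the subgraph of $G^0$ induced by a maximal set of branches pairwise connected by paths in $G^0$. Its enlargement ${}^{*}S^0$ has as 0-hypernodes the classes $[x_n]$ of sequences of 0-nodes of $S^0$. Wdistance. The wdistance $d(x,y)$ is the minimum ordinal length of a two-ended 0-walk or 1-walk terminating at $x$ and $y$. A finite 0-walk has length equal to its number of branch traversals; each 0-tip traversal contributes $\omega$; 1-walk lengths are natural sums, so $d<\omega^2$. 1-wconnected means every two nodes are joined by such a walk. Enlargement and principal 1-galaxy. Fix a free ultrafilter $\mathcal F$ on $\mathbb N$. Hypernodes of ${}^{*}G^1$ are classes $[x_n]$ of sequences of 0-nodes or of 1-nodes, modulo agreement on a set in $\mathcal F$. A standard hypernode is the class of a constant sequence. Hypernodes $[x_n],[y_n]$ are 1-limitedly distant if $\{n:d(x_n,y_n)\le\omega\cdot k\}\in\mathcal F$ for some $k\in\mathbb N$. The principal 1-galaxy $\Gamma_0^1$ is the set of hypernodes 1-limitedly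 distant from a standard hypernode, together with the hyperbranches joining them. *)

From Stdlib Require Import List Arith.
Import ListNotations.
Set Implicit Arguments.

(* A raw 1-graph: 0-nodes [N0] with adjacency [adj] (a branch is the
   two-element set {x,y} with [adj x y]); 1-nodes [N1]; for each 1-node [y],
   [tips y] is the set of one-ended 0-paths whose 0-tips are members of [y],
   and [emb y] is the (optional) 0-node augmenting [y]. *)
Record graph1 := {
  N0 : Type;
  adj : N0 -> N0 -> Prop;
  N1 : Type;
  tips : N1 -> (nat -> N0) -> Prop;
  emb : N1 -> option N0
}.

(* one-ended 0-path x0, b0, x1, b1, ... (distinct nodes, hence distinct branches) *)
Definition one_ended_path (G : graph1) (p : nat -> N0 G) : Prop :=
  (forall i, adj G (p i) (p (S i))) /\ (forall i j, p i = p j -> i = j).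

(* eventually identical one-ended sequences (same 0-tip) *)
Definition eventually_identical (T : Type) (p q : nat -> T) : Prop :=
  exists a b, forall i, p (a + i) = q (b + i).

Definition is_1graph (G : graph1) : Prop :=
  (* branches are two-element sets of 0-nodes *)
  (forall x y, adj G x y -> adj G y x) /\
  (forall x, ~ adj G x x) /\
  (* tips y is a union of 0-tips (equivalence classes) *)
  (forall y p, tips G y p -> one_ended_path G p) /\
  (forall y p q, tips G y p -> one_ended_path G q ->
     eventually_identical p q -> tips G y q) /\
  (* the 1-nodes partition the set of all 0-tips into nonempty blocks *)
  (forall p, one_ended_path G p -> exists y, tips G y p /\
     forall y', tips G y' p -> y' = y) /\
  (forall y, exists p, tips G y p) /\
  (forall y y' x, emb G y = Some x -> emb G y' = Some x -> y = y').

Fixpoint adj_chain (G : graph1) (l : list (N0 G)) : Prop :=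
  match l with
  | x :: ((y :: _) as t) => adj G x y /\ adj_chain G t
  | _ => True
  end.

Definition fin_path (G : graph1) (x y : N0 G) (l : list (N0 G)) : Prop :=
  NoDup l /\ adj_chain G l /\ hd_error l = Some x /\ last l x = y.

(* a set of branches, given as a symmetric relation contained in adj *)
Definition branch_set (G : graph1) (S : N0 G -> N0 G -> Prop) : Prop :=
  (forall x y, S x y -> adj G x y) /\ (forall x y, S x y -> S y x).

Definition br_connected (G : graph1) (a b c d : N0 G) : Prop :=
  exists u v l, (u = a \/ u = b) /\ (v = c \/ v = d) /\ fin_path G u v l.

Definition pairwise_connected (G : graph1) (S : N0 G -> N0 G -> Prop) : Prop :=
  forall a b c d, S a b -> S c d -> br_connected G a b c d.

Definition zero_section (G : graph1) (S : N0 G -> N0 G -> Prop) : Prop :=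
  branch_set G S /\ pairwise_connected G S /\
  forall T, branch_set G T -> pairwise_connected G T ->
    (forall x y, S x y -> T x y) -> forall x y, T x y -> S x y.

Definition section_node (G : graph1) (S : N0 G -> N0 G -> Prop) (x : N0 G) : Prop :=
  exists y, S x y.

Definition node (G : graph1) : Type := (N0 G + N1 G)%type.

(* ordinals  omega*k + n  (< omega^2) as pairs (k, n) *)
Definition ord2 : Type := (nat * nat)%type.
Definition ord_le (a b : ord2) : Prop :=
  fst a < fst b \/ (fst a = fst b /\ snd a <= snd b).
Definition ord_add (a b : ord2) : ord2 := (fst a + fst b, snd a + snd b). (* natural sum *)
Definition omega_times (k : nat) : ord2 := (k, 0).

(* nontrivial 0-walks that may occur as pieces of a walk *)
Inductive seg (G : graph1) : Type :=
| SFin : list (N0 G) -> seg G              (* finite: x0 b0 x1 ... xn, n >= 1 *)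
| SRay : (nat -> N0 G) -> seg G            (* x0 b0 x1 ... towards a 0-tip *)
| SRev : (nat -> N0 G) -> seg G            (* from a 0-tip ... x1 b0 x0 *)
| SEndless : (nat -> N0 G) -> (nat -> N0 G) -> seg G.
    (* SEndless f g : ... g2 g1 g0=f0 f1 f2 ... (0-tip to 0-tip) *)
Arguments SFin {G}. Arguments SRay {G}. Arguments SRev {G}. Arguments SEndless {G}.

Definition ray (G : graph1) (r : nat -> N0 G) : Prop :=
  forall i, adj G (r i) (r (S i)).

Definition seg_valid (G : graph1) (s : seg G) : Prop :=
  match s with
  | SFin l => 2 <= length l /\ adj_chain G l
  | SRay r => ray G r
  | SRev r => ray G r
  | SEndless f g => ray G f /\ ray G g /\ f 0 = g 0
  end.

(* an end of a 0-walk: a terminal 0-node, or a tail traversing a 0-tip *)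
Inductive wend (G : graph1) : Type :=
| EFin : N0 G -> wend G
| ETip : (nat -> N0 G) -> wend G.
Arguments EFin : clear implicits. Arguments ETip : clear implicits.

Definition seg_left (G : graph1) (s : seg G) : option (wend G) :=
  match s with
  | SFin l => match l with x :: _ => Some (EFin G x) | [] => None end
  | SRay r => Some (EFin G (r 0))
  | SRev r => Some (ETip G r)
  | SEndless f g => Some (ETip G g)
  end.

Definition seg_right (G : graph1) (s : seg G) : option (wend G) :=
  match s with
  | SFin l => match l with x :: _ => Some (EFin G (last l x)) | [] => None end
  | SRay r => Some (ETip G r)
  | SRev r => Some (EFin G (r 0))
  | SEndless f g => Some (ETip G f)
  end.

(* ordinal length of a 0-walk piece: n branches, or omega per 0-tip traversal *)
Definition seg_len (G : graph1) (s : seg G) : ord2 :=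
  match s with
  | SFin l => (0, length l - 1)
  | SRay _ => (1, 0)
  | SRev _ => (1, 0)
  | SEndless _ _ => (2, 0)
  end.

(* an end of a 0-walk reaches the node z of G^1:
   - a 0-node x: the end terminates at x;
   - a 1-node y: the end terminates at the 0-node augmenting y, or the end
     traverses (is eventually identical to a representative of) a 0-tip in y *)
Definition end_reaches (G : graph1) (e : wend G) (z : node G) : Prop :=
  match z with
  | inl x => e = EFin G x
  | inr y =>
      (exists v, emb G y = Some v /\ e = EFin G v) \/
      (exists r p, e = ETip G r /\ tips G y p /\ eventually_identical r p)
  end.

Definition reaches (G : graph1) (e : option (wend G)) (z : node G) : Prop :=
  match e with Some e' => end_reaches e' z | None => False end.

(* two-ended 0-walks / 1-walks  z0, W0, z1, W1, ..., z_m  from z0 to z_m,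
   together with their ordinal length (natural sum of the lengths of the
   0-walk pieces); the trivial walk at z has length 0. *)
Unset Implicit Arguments.
Inductive walk (G : graph1) : node G -> node G -> ord2 -> Prop :=
| walk_nil : forall z : node G, walk G z z (0, 0)
| walk_cons : forall (z : node G) (s : seg G) (z' z'' : node G) len,
    seg_valid s -> reaches (seg_left s) z -> reaches (seg_right s) z' ->
    walk G z' z'' len -> walk G z z'' (ord_add (seg_len s) len).
Set Implicit Arguments.

Definition wconnected1 (G : graph1) : Prop :=
  forall z z' : node G, exists len, walk G z z' len.

Definition is_wdist (G : graph1) (z z' : node G) (d : ord2) : Prop :=
  walk G z z' d /\ forall len, walk G z z' len -> ord_le d len.

Definition free_ultrafilter (F : (nat -> Prop) -> Prop) : Prop :=
  F (fun _ => True) /\ ~ F (fun _ => False) /\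
  (forall A B : nat -> Prop, F A -> (forall n, A n -> B n) -> F B) /\
  (forall A B : nat -> Prop, F A -> F B -> F (fun n => A n /\ B n)) /\
  (forall A : nat -> Prop, F A \/ F (fun n => ~ A n)) /\
  (forall m, ~ F (fun n => n = m)).

Definition limitedly_distant1 (G : graph1) (F : (nat -> Prop) -> Prop)
  (u w : nat -> node G) : Prop :=
  exists k, F (fun n => exists d, is_wdist (u n) (w n) d /\ ord_le d (omega_times k)).

(* the hypernode [u_n] lies in the principal 1-galaxy of *G^1:
   it is 1-limitedly distant from a standard hypernode [z, z, z, ...] *)
Definition in_principal_galaxy1 (G : graph1) (F : (nat -> Prop) -> Prop)
  (u : nat -> node G) : Prop :=
  exists z : node G, limitedly_distant1 F u (fun _ => z).

Arguments zero_section : clear implicits.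
Arguments section_node : clear implicits.
Arguments in_principal_galaxy1 : clear implicits.
Arguments wconnected1 : clear implicits.
Arguments is_1graph : clear implicits.

(* Two 0-nodes of the same 0-section are joined by a finite 0-path: through
   the branches incident to them, which the section connects by a path in G^0.
   So their wdistance is a natural number, at most omega.  Hence for any
   sequence [x_n] of 0-nodes of S^0, every x_n lies within omega of the fixed
   node x_0, and [x_n] is 1-limitedly distant (with k = 1) from the standard
   hypernode [x_0]. *)
From Stdlib Require Import List Arith Lia Classical.
Import ListNotations.
Set Implicit Arguments.
Unset Strict Implicit.

Lemma walk_cat (G : graph1) (a b c : node G) l1 l2 :
  walk G a b l1 -> walk G b c l2 -> walk G a c (ord_add l1 l2).
Proof.
  intros Hab; revert l2 c; induction Hab as [|z s z' z'' len Hs Hl Hr _ IH];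
    intros l2 c Hbc.
  - destruct l2; exact Hbc.
  - replace (ord_add (ord_add (seg_len s) len) l2)
      with (ord_add (seg_len s) (ord_add len l2))
      by (unfold ord_add; simpl; f_equal; lia).
    eapply walk_cons; eauto.
Qed.

Lemma adj_walk (G : graph1) (p q : N0 G) :
  adj G p q -> walk G (inl p) (inl q) (0, 1).
Proof.
  intros Hpq.
  change (0, 1) with (ord_add (seg_len (SFin [p; q])) (0, 0)).
  apply walk_cons with (z' := inl q); simpl; auto.
  apply walk_nil.
Qed.

Definition finite_walk (G : graph1) (a b : node G) : Prop :=
  exists m, walk G a b (0, m).
Arguments finite_walk : clear implicits.

Lemma finite_walk_cat (G : graph1) (a b c : node G) :
  finite_walk G a b -> finite_walk G b c -> finite_walk G a c.
Proof.
  intros [m1 H1] [m2 H2]; exists (m1 + m2).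
  exact (walk_cat H1 H2).
Qed.

Lemma adj_chain_finite_walk (G : graph1) (l : list (N0 G)) (u d : N0 G) :
  adj_chain G (u :: l) -> finite_walk G (inl u) (inl (last (u :: l) d)).
Proof.
  revert u; induction l as [|w t IH]; intros u Hchain.
  - exists 0; apply walk_nil.
  - destruct Hchain as [Huw Hchain].
    apply finite_walk_cat with (inl w).
    + exists 1; exact (adj_walk Huw).
    + exact (IH w Hchain).
Qed.

Lemma fin_path_finite_walk (G : graph1) (u v : N0 G) l :
  fin_path G u v l -> finite_walk G (inl u) (inl v).
Proof.
  intros [_ [Hchain [Hhd Hlast]]].
  destruct l as [|a t]; [discriminate|].
  injection Hhd as ->; subst v.
  exact (adj_chain_finite_walk u Hchain).
Qed.

Lemma nat_least_witness (P : nat -> Prop) (m : nat) :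
  P m -> exists n, P n /\ forall k, P k -> n <= k.
Proof.
  induction m as [m IH] using (well_founded_induction lt_wf); intros Pm.
  destruct (classic (exists k, k < m /\ P k)) as [[k [Hkm Pk]] | Hnone].
  - exact (IH k Hkm Pk).
  - exists m; split; [exact Pm|].
    intros k Pk; destruct (le_lt_dec m k); [assumption|].
    exfalso; apply Hnone; eauto.
Qed.

(* Any walk through a 0-tip has length >= omega, so the shortest finite
   walk realizes the wdistance. *)
Lemma finite_walk_wdist_le_omega (G : graph1) (a b : node G) :
  finite_walk G a b -> exists d, is_wdist a b d /\ ord_le d (omega_times 1).
Proof.
  intros [m Hm].
  destruct (@nat_least_witness (fun n => walk G a b (0, n)) m Hm)
    as [n [Hn Hleast]].
  exists (0, n); split; [split; [exact Hn|] | left; simpl; lia].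
  intros [k j] Hw; unfold ord_le; simpl.
  destruct k as [|k]; [right; auto | left; lia].
Qed.

Lemma section_nodes_finite_walk (G : graph1) (S : N0 G -> N0 G -> Prop) x y :
  is_1graph G -> zero_section G S -> section_node G S x -> section_node G S y ->
  finite_walk G (inl x) (inl y).
Proof.
  intros [Hsym _] [[HSadj _] [Hconn _]] [x' Hx] [y' Hy].
  destruct (Hconn _ _ _ _ Hx Hy) as [u [v [l [Hu [Hv Hpath]]]]].
  apply finite_walk_cat with (inl u); [|apply finite_walk_cat with (inl v)].
  - destruct Hu as [-> | ->]; [exists 0; apply walk_nil|].
    exists 1; exact (adj_walk (HSadj _ _ Hx)).
  - exact (fin_path_finite_walk Hpath).
  - destruct Hv as [-> | ->]; [exists 0; apply walk_nil|].
    exists 1; exact (adj_walk (Hsym _ _ (HSadj _ _ Hy))).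
Qed.

Theorem mainTheorem14 (G : graph1) (F : (nat -> Prop) -> Prop)
  (S : N0 G -> N0 G -> Prop) :
  is_1graph G -> wconnected1 G -> free_ultrafilter F -> zero_section G S ->
  forall x : nat -> N0 G, (forall n, section_node G S (x n)) ->
  in_principal_galaxy1 G F (fun n => inl (x n)).
Proof.
  intros HG _ [Ftrue [_ [Fmono _]]] HS x Hx.
  exists (inl (x 0)), 1.
  apply (Fmono (fun _ => True)); [exact Ftrue|].
  intros n _.
  apply finite_walk_wdist_le_omega.
  exact (section_nodes_finite_walk HG HS (Hx n) (Hx 0)).
Qed.
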